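(* Let $R=\mathsf k[x_1,\ldots,x_n]$ and let $I\subseteq R$ be an ideal generated by square-free monomials $m_1,\ldots,m_q$ satisfying $m_b\mid\mathrm{lcm}(m_i:i\in B)$ for every $(b,B)\in\mathcal{D}$, where $\mathcal{D}$ is a finite subset of $[q]\times(2^{[q]}\smallsetminus\{\emptyset\})$. Then: (1) $\psi_I(\varepsilon_{\mathcal{D},i})=\psi_I(\epsilon_i)=m_i$ for all $i\in[q]$; (2) $\psi_I(\varepsilon_{\mathcal{D}}^{\mathbf a})=\mathbf m^{\mathbf a}$ for each $\mathbf a\in\mathcal N^r_q$, $r\ge 1$; (3) $\psi_I(\mathcal{E}_{\mathcal{D}}^r)R=I^r$ for every $r>0$; (4) $\psi_I(\mathrm{lcm}(\varepsilon_{\mathcal{D}}^{\mathbf a_1},\ldots,\varepsilon_{\mathcal{D}}^{\mathbf a_t}))=\mathrm{lcm}(\mathbf m^{\mathbf a_1},\ldots,\mathbf m^{\mathbf a_t})$ for all $r\ge1$, $t\ge1$ and $\mathbf a_1,\ldots,\mathbf a_t\in\mathcal N^r_q$.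
   Context: $S_{[q]}=\mathsf k[y_A:\emptyset\ne A\subseteq[q]]$ over a field $\mathsf k$. $\epsilon_i=\prod_{\emptyset\ne A\subseteq[q],\,i\in A}y_A$. $Q(\mathcal{D})=\{A\subseteq[q]:A\ne\emptyset,\ A\cap B\ne\emptyset\text{ for all }(b,B)\in\mathcal{D}\text{ with }b\in A\}$; $\varepsilon_{\mathcal{D},i}=\prod_{A\in Q(\mathcal{D}),\,i\in A}y_A$; $\mathcal{E}_{\mathcal{D}}=(\varepsilon_{\mathcal{D},1},\ldots,\varepsilon_{\mathcal{D},q})$. $\mathcal N^r_q=\{\mathbf a\in\mathbb N^q:a_1+\dots+a_q=r\}$, $\varepsilon_{\mathcal{D}}^{\mathbf a}=\prod_i\varepsilon_{\mathcal{D},i}^{a_i}$, $\mathbf m^{\mathbf a}=\prod_i m_i^{a_i}$. For $k\in[n]$, $\mathcal A_k=\{j\in[q]:x_k\mid m_j\}$. $\psi_I:S_{[q]}\to R$ is the $\mathsf k$-algebra homomorphism with $\psi_I(y_A)=\prod_{k\in[n],\,\mathcal A_k=A}x_k$ if $A=\mathcal A_k$ for some $k\in[n]$, and $\psi_I(y_A)=1$ otherwise. *)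

From HB Require Import structures.
From mathcomp Require Import all_boot all_order all_algebra.
From mathcomp Require Import mpoly.
From Stdlib Require Import ClassicalEpsilon.
Set Implicit Arguments. Unset Strict Implicit. Unset Printing Implicit Defensive.
Import Order.TTheory GRing.Theory.
Local Open Scope ring_scope.

Definition decP (P : Prop) : bool :=
  if excluded_middle_informative P then true else false.

Definition rdvd (R : comNzRingType) (p q : R) : Prop := exists c : R, q = c * p.

Definition ideal_gen (R : comNzRingType) (S : R -> Prop) : R -> Prop :=
  fun p => exists (l : seq (R * R)),
    (forall c, c \in l -> S c.2) /\ p = \sum_(c <- l) c.1 * c.2.

Definition ideal_mul (R : comNzRingType) (I J : R -> Prop) : R -> Prop :=
  ideal_gen (fun p => exists a b, I a /\ J b /\ p = a * b).

Fixpoint ideal_pow (R : comNzRingType) (I : R -> Prop) (r : nat) : R -> Prop :=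
  match r with
  | 0 => ideal_gen (fun p => p = 1)
  | r'.+1 => ideal_mul (ideal_pow I r') I
  end.

Definition ideal_ext (A B : comNzRingType) (f : A -> B) (J : A -> Prop) : B -> Prop :=
  ideal_gen (fun p => exists a, J a /\ p = f a).

Definition mono_lcm (k : fieldType) (n : nat) (s : seq {mpoly k[n]}) : {mpoly k[n]} :=
  'X_[foldr (@mlcm n) 0%MM [seq mlead p | p <- s]].

Definition squarefree_monomial (k : fieldType) (n : nat) (p : {mpoly k[n]}) : Prop :=
  exists S : {set 'I_n}, p = \prod_(j in S) 'X_j.

Definition mpow (R : comNzRingType) (q : nat) (m : 'I_q -> R) (a : 'I_q -> nat) : R :=
  \prod_(i < q) m i ^+ a i.

(* ---------- the ring S_[q] = k[y_A : A nonempty subset of [q]] ---------- *)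
Definition NE (q : nat) := {A : {set 'I_q} | A != set0}.
Definition NN (q : nat) : nat := #|{: NE q}|.
Definition Sq (k : fieldType) (q : nat) := {mpoly k[NN q]}.

Definition yvar (k : fieldType) (q : nat) (A : NE q) : Sq k q := 'X_(enum_rank A).

Definition eps (k : fieldType) (q : nat) (i : 'I_q) : Sq k q :=
  \prod_(A : NE q | i \in val A) yvar k A.

Definition inQ (q : nat) (D : {set 'I_q * {set 'I_q}}) (A : {set 'I_q}) : bool :=
  (A != set0) &&
  [forall d in D, (d.1 \in A) ==> (A :&: d.2 != set0)].

Definition veps (k : fieldType) (q : nat) (D : {set 'I_q * {set 'I_q}}) (i : 'I_q)
  : Sq k q :=
  \prod_(A : NE q | (i \in val A) && inQ D (val A)) yvar k A.

Definition E_D (k : fieldType) (q : nat) (D : {set 'I_q * {set 'I_q}}) : Sq k q -> Prop :=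
  ideal_gen (fun p => exists i, p = veps k D i).

Definition Aset (k : fieldType) (n q : nat) (m : 'I_q -> {mpoly k[n]}) (l : 'I_n)
  : {set 'I_q} :=
  [set j | decP (rdvd 'X_l (m j))].

Definition psi_y (k : fieldType) (n q : nat) (m : 'I_q -> {mpoly k[n]}) (A : NE q)
  : {mpoly k[n]} :=
  \prod_(l < n | Aset m l == val A) 'X_l.

Definition psi (k : fieldType) (n q : nat) (m : 'I_q -> {mpoly k[n]}) (p : Sq k q)
  : {mpoly k[n]} :=
  p \mPo [tuple psi_y m (enum_val j) | j < NN q].

Arguments yvar k {q} A.
Arguments eps k {q} i.
Arguments veps k {q} D i.
Arguments E_D k {q} D _.

From Pilot Require Import Defs.
From HB Require Import structures.
From mathcomp Require Import all_boot all_order all_algebra.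
From mathcomp Require Import mpoly.
From Stdlib Require Import ClassicalEpsilon FunctionalExtensionality PropExtensionality.
Import Order.TTheory GRing.Theory.
Local Open Scope ring_scope.

(* Everything involved is a monomial, and psi_I sends y^s to x^phi(s), where
   phi(s)_l is the exponent of y_(A_l) in s (0 if A_l is empty). A square-free
   m_i equals the product of the x_l with i in A_l, which is psi_I(epsilon_i);
   it is also psi_I(varepsilon_(D,i)), because the divisibility hypotheses put
   every nonempty A_l into Q(D). This gives (1) and (2); (3) follows since
   psi_I is a ring morphism, and (4) since phi acts coordinatewise and hence
   commutes with lcm, the coordinatewise max of exponents. *)

Lemma pred_ext {T : Type} (P Q : T -> Prop) : (forall x, P x <-> Q x) -> P = Q.
Proof.
by move=> PQ; apply: functional_extensionality => x; apply: propositional_extensionality.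
Qed.

Definition family_set {I T : Type} (g : I -> T) : T -> Prop := fun p => exists i, p = g i.

Definition image_set {A B : Type} (f : A -> B) (S : A -> Prop) : B -> Prop :=
  fun p => exists a, S a /\ p = f a.

Lemma image_family_set {I A B : Type} (f : A -> B) (g : I -> A) :
  image_set f (family_set g) = family_set (f \o g).
Proof.
apply: pred_ext => p; split=> [[_ [[i ->] ->]] | [i ->]]; first by exists i.
by exists (g i); split; [exists i|].
Qed.

Section IdealGen.
Context {R : comNzRingType}.
Implicit Types (S T : R -> Prop) (x y : R).

Definition prod_set S T : R -> Prop := fun p => exists a b, S a /\ T b /\ p = a * b.

Fixpoint pow_set S (r : nat) : R -> Prop :=
  if r is r'.+1 then prod_set (pow_set S r') S else fun p => p = 1.

Lemma ideal_gen_base S x : S x -> ideal_gen S x.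
Proof.
by move=> Sx; exists [:: (1, x)]; split=> [c /[1!inE] /eqP -> | ]; rewrite ?big_seq1 ?mul1r.
Qed.

Lemma ideal_gen0 S : ideal_gen S 0.
Proof. by exists [::]; rewrite big_nil. Qed.

Lemma ideal_genD S x y : ideal_gen S x -> ideal_gen S y -> ideal_gen S (x + y).
Proof.
move=> [l1 [S1 ->]] [l2 [S2 ->]]; exists (l1 ++ l2); rewrite big_cat; split=> // c.
by rewrite mem_cat => /orP[/S1 | /S2].
Qed.

Lemma ideal_genMl S c x : ideal_gen S x -> ideal_gen S (c * x).
Proof.
move=> [l [Sl ->]]; exists [seq (c * p.1, p.2) | p <- l]; split.
  by move=> _ /mapP[p /Sl Sp ->].
by rewrite big_map mulr_sumr; apply: eq_bigr => p _; rewrite mulrA.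
Qed.

Lemma ideal_gen_ind S (P : R -> Prop) :
  P 0 -> (forall x y, P x -> P y -> P (x + y)) -> (forall c x, P x -> P (c * x)) ->
  (forall x, S x -> P x) -> forall x, ideal_gen S x -> P x.
Proof.
move=> P0 PD PM PS _ [l [Sl ->]]; elim: l Sl => [|c l IHl] Sl; first by rewrite big_nil.
rewrite big_cons; apply: PD; first by apply/PM/PS/Sl; rewrite inE eqxx.
by apply: IHl => c' lc'; apply: Sl; rewrite inE lc' orbT.
Qed.

Lemma ideal_gen_least S T :
  (forall x, S x -> ideal_gen T x) -> forall x, ideal_gen S x -> ideal_gen T x.
Proof. by apply: ideal_gen_ind; [exact: ideal_gen0 | exact: ideal_genD | exact: ideal_genMl]. Qed.

Lemma ideal_gen_prod S T a b :
  ideal_gen S a -> ideal_gen T b -> ideal_gen (prod_set S T) (a * b).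
Proof.
move=> Sa Tb; elim/ideal_gen_ind: a / Sa => [|x y|c x|s Ss].
- by rewrite mul0r; apply: ideal_gen0.
- by rewrite mulrDl; apply: ideal_genD.
- by rewrite -mulrA; apply: ideal_genMl.
elim/ideal_gen_ind: b / Tb => [|x y|c x|t Tt].
- by rewrite mulr0; apply: ideal_gen0.
- by rewrite mulrDr; apply: ideal_genD.
- by rewrite mulrCA; apply: ideal_genMl.
by apply: ideal_gen_base; exists s, t.
Qed.

Lemma ideal_mul_gen S T : ideal_mul (ideal_gen S) (ideal_gen T) = ideal_gen (prod_set S T).
Proof.
apply: pred_ext => x; split; apply: ideal_gen_least => _ [a [b [Sa [Tb ->]]]].
  exact: ideal_gen_prod.
by apply: ideal_gen_base; exists a, b; do 2?split=> //; exact: ideal_gen_base.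
Qed.

Lemma ideal_pow_gen S r : ideal_pow (ideal_gen S) r = ideal_gen (pow_set S r).
Proof. by elim: r => [|r IHr] //=; rewrite IHr ideal_mul_gen. Qed.

End IdealGen.

Section IdealExtension.
Context {A B : comNzRingType} (f : {rmorphism A -> B}).
Implicit Types S : A -> Prop.

Lemma ideal_ext_gen S : ideal_ext f (ideal_gen S) = ideal_gen (image_set f S).
Proof.
apply: pred_ext => x; split; apply: ideal_gen_least => _ [a [Sa ->]]; last first.
  by apply: ideal_gen_base; exists a; split; [exact: ideal_gen_base|].
move: a Sa; apply: ideal_gen_ind => [|a b|c a|a Sa].
- by rewrite rmorph0; apply: ideal_gen0.
- by rewrite rmorphD; apply: ideal_genD.
- by rewrite rmorphM; apply: ideal_genMl.
by apply: ideal_gen_base; exists a.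
Qed.

Lemma image_pow_set S r : image_set f (pow_set S r) = pow_set (image_set f S) r.
Proof.
elim: r => [|r IHr] /=; apply: pred_ext => x.
  by split=> [[_ [-> ->]] | ->]; [exact: rmorph1 | exists 1; rewrite rmorph1].
rewrite -IHr; split=> [[_ [[a [b [Sa [Sb ->]]]] ->]] | [_ [_ [[a [Sa ->]] [[b [Sb ->]] ->]]]]].
  by exists (f a), (f b); rewrite rmorphM; split; [exists a | split; [exists b|]].
by exists (a * b); rewrite rmorphM; split=> //; exists a, b.
Qed.

Lemma ideal_ext_pow_gen S r :
  ideal_ext f (ideal_pow (ideal_gen S) r) = ideal_pow (ideal_gen (image_set f S)) r.
Proof. by rewrite !ideal_pow_gen ideal_ext_gen image_pow_set. Qed.

End IdealExtension.

(* [decP] alone is ssrbool's. *)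
Lemma decPP (P : Prop) : reflect P (Defs.decP P).
Proof. by rewrite /Defs.decP; case: excluded_middle_informative => ?; constructor. Qed.

Lemma rmorph_mpow {R R' : comNzRingType} (f : {rmorphism R -> R'}) {q : nat}
    (g : 'I_q -> R) (a : 'I_q -> nat) :
  f (mpow g a) = mpow (f \o g) a.
Proof. by rewrite rmorph_prod; apply: eq_bigr => i _; rewrite rmorphXn. Qed.

Section Monomials.
Context {k : fieldType} {n : nat}.

Lemma rdvd_XU_mpolyX (l : 'I_n) (s : 'X_{1..n}) :
  rdvd ('X_l : {mpoly k[n]}) 'X_[s] <-> (0 < s l)%N.
Proof.
split=> [[c Xs] | s_l]; last first.
  exists 'X_[s - U_(l)]; rewrite -mpolyXD submK //.
  by apply/forallP => j; rewrite mnm1E; case: eqP => [<-|].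
rewrite lt0n; apply/negP => /eqP sl0.
pose v j : k := (j != l)%:R.
have := congr1 (meval v) Xs; rewrite mevalM mevalXU mevalX /v eqxx mulr0 big1 => [/eqP|j _].
  by rewrite oner_eq0.
by case: eqP => [->|]; rewrite ?sl0 ?expr0 ?expr1n.
Qed.

Lemma prod_XU_mpolyX (S : {set 'I_n}) :
  \prod_(j in S) 'X_j = 'X_[[multinom (j \in S : nat) | j < n]] :> {mpoly k[n]}.
Proof.
rewrite mpolyXE_id big_mkcond; apply: eq_bigr => j _.
by rewrite mnmE; case: (j \in S).
Qed.

Lemma squarefree_mlead (p : {mpoly k[n]}) : squarefree_monomial p -> p = 'X_[mlead p].
Proof. by move=> [S ->]; rewrite prod_XU_mpolyX mleadXm. Qed.

Lemma mpow_mlead {q : nat} (f : 'I_q -> {mpoly k[n]}) (a : 'I_q -> nat) :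
  (forall i, f i = 'X_[mlead (f i)]) -> mpow f a = 'X_[mlead (mpow f a)].
Proof.
move=> f_mono; rewrite /mpow (eq_bigr (fun i => 'X_[mlead (f i)] ^+ a i)) => [|i _].
  by rewrite mprodXnE mleadXm.
by rewrite -f_mono.
Qed.

Lemma foldr_mlcm_gt0 {T : eqType} (f : T -> 'X_{1..n}) (r : seq T) (l : 'I_n) :
  (0 < foldr (@mlcm n) 0%MM (map f r) l)%N -> exists2 x, x \in r & (0 < f x l)%N.
Proof.
elim: r => [|x r IHr] /=; first by rewrite mnm0E.
rewrite mnmE; case: (posnP (f x l)) => [-> | fx_l _]; last by exists x; rewrite ?mem_head.
by rewrite max0n => /IHr[y ry fy_l]; exists y; rewrite // inE ry orbT.
Qed.

End Monomials.

HB.instance Definition _ (k : fieldType) (n q : nat) (m : 'I_q -> {mpoly k[n]}) :=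
  GRing.RMorphism.copy (psi m) (comp_mpoly [tuple psi_y m (enum_val j) | j < NN q]).

Section Psi.
Context {k : fieldType} {n q : nat} (m : 'I_q -> {mpoly k[n]}).

Lemma psi_yvar (A : NE q) : psi m (yvar k A) = psi_y m A.
Proof. by rewrite /psi /yvar comp_mpolyXU -tnth_nth tnth_mktuple enum_rankK. Qed.

Lemma psi_prod_yvarX (e : NE q -> nat) :
  psi m (\prod_A yvar k A ^+ e A)
  = \prod_(l < n) 'X_l ^+ (if insub (Aset m l) is Some A then e A else 0%N).
Proof.
rewrite rmorph_prod; under eq_bigr => A _ do rewrite rmorphXn /= psi_yvar /psi_y -prodrXl.
rewrite (exchange_big_dep xpredT) //=; apply: eq_bigr => l _.
case: insubP => [A0 _ A0E | /negPn/eqP Al0].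
  by rewrite (big_pred1 A0) // => A; rewrite /= -A0E val_eqE eq_sym.
by rewrite big_pred0 // => A; rewrite Al0 eq_sym; apply/negbTE/(valP A).
Qed.

Lemma psi_prod_yvar (P : pred {set 'I_q}) :
  ~~ P set0 -> psi m (\prod_(A : NE q | P (val A)) yvar k A) = \prod_(l < n | P (Aset m l)) 'X_l.
Proof.
move=> P0; rewrite big_mkcond (eq_bigr (fun A => yvar k A ^+ P (val A))) => [|A _]; last first.
  by case: (P _).
rewrite psi_prod_yvarX [RHS]big_mkcond; apply: eq_bigr => l _.
by case: insubP => [A _ <- | /negPn/eqP ->]; [case: (P _) | rewrite (negbTE P0)].
Qed.

Definition psi_mnm (s : 'X_{1..NN q}) : 'X_{1..n} :=
  [multinom if insub (Aset m l) is Some A then s (enum_rank A) else 0%N | l < n].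

Lemma psi_mpolyX (s : 'X_{1..NN q}) : psi m 'X_[s] = 'X_[psi_mnm s].
Proof.
have -> : 'X_[s] = \prod_A yvar k A ^+ s (enum_rank A) :> Sq k q.
  rewrite mpolyXE_id (reindex enum_rank) //.
  by exists enum_val => A _; [exact: enum_rankK | exact: enum_valK].
by rewrite psi_prod_yvarX [RHS]mpolyXE_id; apply: eq_bigr => l _; rewrite mnmE.
Qed.

Lemma psi_mnm_mlcm (s t : 'X_{1..NN q}) : psi_mnm (mlcm s t) = mlcm (psi_mnm s) (psi_mnm t).
Proof. by apply/mnmP => l; rewrite /mlcm !mnmE; case: insub => // A; rewrite mnmE. Qed.

Lemma psi_mnm0 : psi_mnm 0 = 0%MM.
Proof. by apply/mnmP => l; rewrite !mnmE; case: insub => // A; rewrite mnm0E. Qed.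

Lemma psi_mono_lcm (ps : seq (Sq k q)) :
  (forall p, p \in ps -> p = 'X_[mlead p]) -> psi m (mono_lcm ps) = mono_lcm (map (psi m) ps).
Proof.
rewrite /mono_lcm psi_mpolyX -map_comp => ps_mono; congr 'X_[_].
elim: ps ps_mono => [|p ps IHps] ps_mono /=; first exact: psi_mnm0.
rewrite psi_mnm_mlcm IHps => [|p' ps_p']; last by apply: ps_mono; rewrite inE ps_p' orbT.
by rewrite [in psi m p](ps_mono p (mem_head _ _)) psi_mpolyX mleadXm.
Qed.

End Psi.

Lemma veps_mlead (k : fieldType) (q : nat) (D : {set 'I_q * {set 'I_q}}) (i : 'I_q) :
  veps k D i = 'X_[mlead (veps k D i)].
Proof. by rewrite /veps /yvar mprodXE mleadXm. Qed.

Section SquarefreeGenerators.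
Context {k : fieldType} {n q : nat} (m : 'I_q -> {mpoly k[n]}) (D : {set 'I_q * {set 'I_q}}).
Hypothesis m_squarefree : forall i, squarefree_monomial (m i).
Hypothesis m_dvd_lcm : forall d, d \in D -> rdvd (m d.1) (mono_lcm [seq m i | i in d.2]).

Let m_mlead i : m i = 'X_[mlead (m i)] := squarefree_mlead _ (m_squarefree i).

Lemma mem_Aset (l : 'I_n) (i : 'I_q) : (i \in Aset m l) = (0 < mlead (m i) l)%N.
Proof. by rewrite inE {1}m_mlead; apply/decPP/idP => /rdvd_XU_mpolyX. Qed.

Lemma prod_Aset (i : 'I_q) : m i = \prod_(l < n | i \in Aset m l) 'X_l.
Proof.
have [S mS] := m_squarefree i; rewrite {1}mS; apply: eq_bigl => l.
by rewrite mem_Aset mS prod_XU_mpolyX mleadXm mnmE; case: (l \in S).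
Qed.

Lemma Aset_inQ (l : 'I_n) (i : 'I_q) : i \in Aset m l -> inQ D (Aset m l).
Proof.
move=> iAl; rewrite /inQ; apply/andP; split; first by apply/set0Pn; exists i.
apply/forall_inP => d Dd; apply/implyP => d1Al.
have [c lcmE] := m_dvd_lcm d Dd.
have [c' md1E] : rdvd 'X_l (m d.1) by rewrite m_mlead; apply/rdvd_XU_mpolyX; rewrite -mem_Aset.
have : rdvd 'X_l (mono_lcm [seq m j | j in d.2]) by exists (c * c'); rewrite lcmE md1E mulrA.
rewrite rdvd_XU_mpolyX /image_mem -map_comp => /foldr_mlcm_gt0[j jd2 jl].
by apply/set0Pn; exists j; rewrite in_setI mem_Aset jl -mem_enum.
Qed.

Lemma psi_eps (i : 'I_q) : psi m (eps k i) = m i.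
Proof. by rewrite (psi_prod_yvar m (fun A => i \in A)) ?inE // -prod_Aset. Qed.

Lemma psi_veps (i : 'I_q) : psi m (veps k D i) = m i.
Proof.
rewrite (psi_prod_yvar m (fun A => (i \in A) && inQ D A)) ?inE // [RHS]prod_Aset.
by apply: eq_bigl => l; apply/andb_idr/Aset_inQ.
Qed.

Lemma psi_mpow_veps (a : 'I_q -> nat) : psi m (mpow (veps k D) a) = mpow m a.
Proof. by rewrite rmorph_mpow; apply: eq_bigr => i _; rewrite /= psi_veps. Qed.

End SquarefreeGenerators.

Theorem proposition4p2 (k : fieldType) (n q : nat)
  (m : 'I_q -> {mpoly k[n]}) (D : {set 'I_q * {set 'I_q}})
  (hsf : forall i, squarefree_monomial (m i))
  (hD : forall d, d \in D -> d.2 != set0)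
  (hdiv : forall d, d \in D ->
      rdvd (m d.1) (mono_lcm [seq m i | i in d.2])) :
  (* (1) *)
  (forall i : 'I_q, psi m (veps k D i) = psi m (eps k i) /\ psi m (eps k i) = m i) /\
  (* (2) *)
  (forall (r : nat) (a : 'I_q -> nat), (1 <= r)%N -> (\sum_(i < q) a i)%N = r ->
      psi m (mpow (veps k D) a) = mpow m a) /\
  (* (3) *)
  (forall r : nat, (0 < r)%N ->
      forall p, ideal_ext (psi m) (ideal_pow (E_D k D) r) p <->
                ideal_pow (ideal_gen (fun f => exists i, f = m i)) r p) /\
  (* (4) *)
  (forall (r t : nat) (a : 'I_t -> 'I_q -> nat), (1 <= r)%N -> (1 <= t)%N ->
      (forall j, (\sum_(i < q) a j i)%N = r) ->
      psi m (mono_lcm [seq mpow (veps k D) (a j) | j : 'I_t])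
      = mono_lcm [seq mpow m (a j) | j : 'I_t]).
Proof.
have psi_vepsE := psi_veps m D hsf hdiv.
have psi_mpowE := psi_mpow_veps m D hsf hdiv.
split; [|split; [|split]].
- by move=> i; rewrite psi_vepsE (psi_eps m hsf).
- by move=> r a _ _; exact: psi_mpowE.
- move=> r _ p; have psi_veps_fun : psi m \o veps k D = m.
    by apply: functional_extensionality => i; exact: psi_vepsE.
  rewrite [E_D k D]/E_D -/(family_set _).
  by rewrite ideal_ext_pow_gen image_family_set psi_veps_fun.
move=> r t a _ _ _.
rewrite psi_mono_lcm => [|_ /imageP[j _ ->]]; last exact/mpow_mlead/veps_mlead.
by rewrite /image_mem -map_comp; congr mono_lcm; apply: eq_map => j; exact: psi_mpowE.
Qed.
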